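(* Let $\mathcal T$ be a closed triangulated surface and let $(\mathcal G,\mathcal D,\{\mathcal D_1,\ldots,\mathcal D_n\})$ be a decomposition of $\mathcal T$. Then the main disc $\mathcal D$ satisfies $T(\mathcal D)\geq \mathrm{mv}(\mathcal T)$ and $V(\mathcal D)\geq \mathrm{mv}(\mathcal T)+1$, where $T(\cdot)$ and $V(\cdot)$ denote the number of triangles and of vertices.
   Context: A triangulated surface is a finite simplicial complex whose underlying space is a connected compact surface; it is closed if the surface has empty boundary. The valence of a vertex is the number of triangles containing it, and $\mathrm{mv}(\mathcal T)$ is the maximal valence of a vertex of $\mathcal T$. A decomposition of a closed triangulated surface $\mathcal T$ is a triple $(\mathcal G,\mathcal D,\{\mathcal D_1,\ldots,\mathcal D_n\})$ with $n\geq 0$ such that: $\mathcal G,\mathcal D,\mathcal D_1,\ldots,\mathcal D_n$ are sub-triangulations (subcomplexes which are triangulated surfaces) of $\mathcal T$; $\mathcal D,\mathcal D_1,\ldots,\mathcal D_n$ are triangulated discs; the interior of $\mathcal D$ contains a vertex of maximal valence in $\mathcal T$; $\mathcal G\cup\mathcal D\cup\mathcal D_1\cup\cdots\cup\mathcal D_n=\mathcal T$; and the intersection of any two of these sub-triangulations is either a triangulated circle or empty. $\mathcal G$ is called the genus-surface and $\mathcal D$ the main disc. *)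

From mathcomp Require Import all_boot.
Set Implicit Arguments.
Unset Strict Implicit.
Unset Printing Implicit Defensive.

Section SimplicialComplexes.
Variable T : finType.

Definition is_complex (K : {set {set T}}) : Prop :=
  forall s, s \in K -> s != set0 /\
    (forall t : {set T}, t \subset s -> t != set0 -> t \in K).

Definition verts (K : {set {set T}}) := [set s in K | #|s| == 1].
Definition edges (K : {set {set T}}) := [set s in K | #|s| == 2].
Definition triangles (K : {set {set T}}) := [set s in K | #|s| == 3].

Definition nV K := #|verts K|.
Definition nE K := #|edges K|.
Definition nT K := #|triangles K|.

Definition tri_deg (K : {set {set T}}) (e : {set T}) :=
  #|[set t in triangles K | e \subset t]|.

Definition valence (K : {set {set T}}) (v : T) :=
  #|[set t in triangles K | v \in t]|.

Definition mv (K : {set {set T}}) := \max_(v : T) valence K v.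

Definition skel (K : {set {set T}}) : rel T :=
  [rel a b | (a != b) && ([set a; b] \in K)].
Definition connected_cplx (K : {set {set T}}) : Prop :=
  forall a b, [set a] \in K -> [set b] \in K -> connect (skel K) a b.

Definition link_rel (K : {set {set T}}) (v : T) : rel T :=
  [rel a b | [set v; a; b] \in triangles K].

(* Triangulated surface: a finite simplicial complex whose underlying space
   is a connected compact surface (possibly with boundary). *)
Definition pure2 (K : {set {set T}}) : Prop :=
  (forall s, s \in K -> #|s| <= 3) /\
  (forall s, s \in K -> exists t, t \in triangles K /\ s \subset t).

Definition links_connected (K : {set {set T}}) : Prop :=
  forall v a b, a != v -> b != v -> [set v; a] \in K -> [set v; b] \in K ->
    connect (link_rel K v) a b.

Definition tri_surface (K : {set {set T}}) : Prop :=
  [/\ is_complex K /\ triangles K != set0,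
      pure2 K,
      (forall e, e \in edges K -> (1 <= tri_deg K e <= 2)),
      links_connected K
    & connected_cplx K].

Definition closed_surface (K : {set {set T}}) : Prop :=
  tri_surface K /\ (forall e, e \in edges K -> tri_deg K e = 2).

Definition interior_vertex (K : {set {set T}}) (v : T) : Prop :=
  [set v] \in K /\ (forall e, e \in edges K -> v \in e -> tri_deg K e = 2).

(* Triangulated disc: a triangulated surface with nonempty boundary and
   Euler characteristic V - E + T = 1 (by the classification of compact
   surfaces this is exactly a surface homeomorphic to a closed disc). *)
Definition tri_disc (K : {set {set T}}) : Prop :=
  [/\ tri_surface K,
      (exists e, e \in edges K /\ tri_deg K e = 1)
    & nV K + nT K = nE K + 1].

Definition tri_circle (K : {set {set T}}) : Prop :=
  [/\ is_complex K,
      K != set0,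
      (forall s, s \in K -> #|s| <= 2),
      (forall v, [set v] \in K -> #|[set e in edges K | v \in e]| = 2)
    & connected_cplx K].

Definition circle_or_empty (K : {set {set T}}) : Prop :=
  K = set0 \/ tri_circle K.

Definition subtriangulation (S K : {set {set T}}) : Prop :=
  S \subset K /\ tri_surface S.

Definition decomposition (K G D : {set {set T}}) (n : nat)
    (Ds : 'I_n -> {set {set T}}) : Prop :=
  [/\ subtriangulation G K /\ subtriangulation D K /\
        (forall i, subtriangulation (Ds i) K),
      tri_disc D /\ (forall i, tri_disc (Ds i)),
      (exists v, interior_vertex D v /\ valence K v = mv K),
      G :|: D :|: \bigcup_(i < n) Ds i = K
    & [/\ circle_or_empty (G :&: D),
          (forall i, circle_or_empty (G :&: Ds i)),
          (forall i, circle_or_empty (D :&: Ds i))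
        & (forall i j, i != j -> circle_or_empty (Ds i :&: Ds j))]].

End SimplicialComplexes.

From mathcomp Require Import all_boot.
Set Implicit Arguments.
Unset Strict Implicit.
Unset Printing Implicit Defensive.

(* Let v be the interior vertex of the main disc D of maximal valence.  Since D
   is a subcomplex containing v in its interior and K is closed, each edge of D
   at v lies in the same two triangles in D as in K; walking around the
   connected link of v in K then shows that the whole star of v in K lies in D.
   So D has at least valence(v) = mv K triangles, and besides v at least as
   many vertices as v has neighbours, which is at least valence(v) because
   each triangle at v has two neighbours of v and each neighbour lies in
   exactly two of these triangles. *)

Lemma sum_pred_card (X : finType) (A : {set X}) (P : pred X) :
  \sum_(x in A) (P x : nat) = #|[set x in A | P x]|.
Proof.
rewrite -sum1_card [RHS]big_mkcond [LHS]big_mkcond /=; apply: eq_bigr => x _.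
by rewrite inE; case: (x \in A); case: (P x).
Qed.

Section Star.
Variable T : finType.
Implicit Types (K D : {set {set T}}) (s t e : {set T}) (v a b c : T).

Definition star K v := [set t in triangles K | v \in t].
Definition nbrs K v := [set c | (c != v) && ([set v; c] \in K)].

Lemma complexS K s t :
  is_complex K -> s \in K -> t \subset s -> t != set0 -> t \in K.
Proof. by move=> cxK /cxK[_]; apply. Qed.

Lemma complex_pair K t a b :
  is_complex K -> t \in K -> a \in t -> b \in t -> [set a; b] \in K.
Proof.
move=> cxK tK at_ bt; apply: complexS tK _ _ => //.
  by rewrite subUset !sub1set at_ bt.
by apply/set0Pn; exists a; rewrite set21.
Qed.

Lemma card_triangle K t : t \in triangles K -> #|t| = 3.
Proof. by rewrite inE => /andP[_ /eqP]. Qed.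

Lemma mem_of_triangle K t : t \in triangles K -> t \in K.
Proof. by rewrite inE => /andP[]. Qed.

Lemma card_triangleD1 K t v : t \in triangles K -> v \in t -> #|t :\ v| = 2.
Proof. by move=> /card_triangle + vt; rewrite (cardsD1 v t) vt; case. Qed.

Lemma triangle_other_vertex K t v :
  t \in triangles K -> v \in t -> exists2 a, a \in t & a != v.
Proof.
move=> tK vt; have : 0 < #|t :\ v| by rewrite (card_triangleD1 tK vt).
by rewrite card_gt0 => /set0Pn[a]; rewrite !inE => /andP[av at_]; exists a.
Qed.

Lemma nV_singletons K : nV K = #|[set c | [set c] \in K]|.
Proof.
rewrite /nV -(card_imset _ (@set1_inj T)); apply: eq_card => s.
rewrite inE; apply/andP/imsetP => [[sK /cards1P[c sc]]|[c]].
  by exists c; rewrite // inE -sc.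
by rewrite inE => cK ->; rewrite cK cards1.
Qed.

Lemma link_rel_sym K v : symmetric (link_rel K v).
Proof. by move=> a b; rewrite /link_rel /= setUAC. Qed.

Lemma mem_of_tri_deg_eq K D e t : D \subset K ->
  tri_deg D e = tri_deg K e -> t \in triangles K -> e \subset t -> t \in D.
Proof.
move=> sDK degDK tK et.
have sub : [set t in triangles D | e \subset t] \subset [set t in triangles K | e \subset t].
  apply/subsetP => x; rewrite !inE => /andP[/andP[xD ->] ->].
  by rewrite (subsetP sDK _ xD).
have eqDK : [set t in triangles D | e \subset t] = [set t in triangles K | e \subset t].
  by apply/eqP; rewrite eqEcard sub /=; move: degDK; rewrite /tri_deg => <-.
have : t \in [set t in triangles K | e \subset t] by rewrite inE tK et.
by rewrite -eqDK inE => /andP[/mem_of_triangle].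
Qed.

Lemma valence_le_nbrs K v : is_complex K ->
  (forall e, e \in edges K -> tri_deg K e <= 2) -> valence K v <= #|nbrs K v|.
Proof.
move=> cxK deg2; rewrite -(leq_pmul2r (isT : 0 < 2)) -!sum_nat_const.
have link_card t : t \in star K v -> \sum_(c in nbrs K v) (c \in t : nat) = 2.
  rewrite inE => /andP[tK vt]; rewrite sum_pred_card -(card_triangleD1 tK vt).
  apply: eq_card => c; rewrite !inE; case: eqP => //= _.
  by case ct: (c \in t); rewrite ?andbF // (complex_pair cxK (mem_of_triangle tK) vt ct).
have deg_nbr c : c \in nbrs K v -> \sum_(t in star K v) (c \in t : nat) <= 2.
  rewrite inE => /andP[cv vcK]; rewrite sum_pred_card.
  apply: leq_trans (deg2 [set v; c] _); last by rewrite inE vcK cards2 [v == c]eq_sym cv.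
  apply: subset_leq_card; apply/subsetP => t; rewrite !inE => /andP[/andP[-> vt] ct].
  by rewrite subUset !sub1set vt ct.
rewrite [leqLHS](eq_bigr _ (fun t tS => esym (link_card t tS))) exchange_big.
exact: leq_sum.
Qed.

Lemma card_nbrs_lt_nV K v : is_complex K -> [set v] \in K -> #|nbrs K v| < nV K.
Proof.
move=> cxK vK; rewrite nV_singletons.
have sub : v |: nbrs K v \subset [set c | [set c] \in K].
  apply/subsetP => c; rewrite !inE => /orP[/eqP -> // | /andP[_ vcK]].
  apply: complexS vcK _ _ => //; first by rewrite sub1set set22.
  by apply/set0Pn; exists c; rewrite set11.
by apply: leq_trans (subset_leq_card sub); rewrite cardsU1 inE eqxx.
Qed.

Section InteriorStar.
Variables (K D : {set {set T}}) (v : T).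
Hypotheses (closedK : closed_surface K) (sDK : D \subset K).
Hypotheses (surfD : tri_surface D) (intv : interior_vertex D v).

Lemma mem_triangle_at_interior_edge c t : c != v -> [set v; c] \in D ->
  t \in triangles K -> [set v; c] \subset t -> t \in D.
Proof.
move=> cv vcD; apply: mem_of_tri_deg_eq sDK _.
have [_ degK] := closedK; have [_ degD] := intv.
rewrite degD ?set21 ?degK // inE cards2 [v == c]eq_sym cv ?vcD //.
by rewrite (subsetP sDK _ vcD).
Qed.

Lemma nbrs_link_closed : closed (link_rel K v) (nbrs D v).
Proof.
apply: intro_closed; first exact/sym_connect_sym/link_rel_sym.
move=> a b vab; rewrite !inE => /andP[av vaD].
have tK : [set v; a; b] \in triangles K := vab.
have bv : b != v.
  apply/eqP => bv; have := card_triangle tK.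
  by rewrite bv setUAC setUid cards2; case: (v != a).
have tD := mem_triangle_at_interior_edge av vaD tK (subsetUl _ _).
have [[cxD _] _ _ _ _] := surfD.
by rewrite bv (complex_pair cxD tD) // !inE eqxx ?orbT.
Qed.

Lemma star_sub_interior : star K v \subset triangles D.
Proof.
have [[[cxK _] _ _ linkK _] _] := closedK.
have [[cxD _] [_ pureD] _ _ _] := surfD.
have [t0 [t0D]] := pureD _ intv.1; rewrite sub1set => vt0.
have [a0 a0t0 a0v] := triangle_other_vertex t0D vt0.
have va0D := complex_pair cxD (mem_of_triangle t0D) vt0 a0t0.
have a0N : a0 \in nbrs D v by rewrite inE a0v va0D.
apply/subsetP => t; rewrite inE => /andP[tK vt].
have [a at_ av] := triangle_other_vertex tK vt.
have vaK := complex_pair cxK (mem_of_triangle tK) vt at_.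
have := closed_connect nbrs_link_closed
  (linkK _ _ _ a0v av (subsetP sDK _ va0D) vaK).
rewrite a0N => /esym; rewrite inE av => vaD.
rewrite inE (mem_triangle_at_interior_edge av vaD tK) ?(card_triangle tK) //.
by rewrite subUset !sub1set vt at_.
Qed.

Lemma nbrs_sub_interior : nbrs K v \subset nbrs D v.
Proof.
have [[[_ _] [_ pureK] _ _ _] _] := closedK.
have [[cxD _] _ _ _ _] := surfD.
apply/subsetP => c; rewrite !inE => /andP[-> vcK] /=.
have [t [tK vct]] := pureK _ vcK.
have vt : v \in t by apply: (subsetP vct); rewrite set21.
have /mem_of_triangle tD : t \in triangles D.
  by apply: (subsetP star_sub_interior); rewrite inE tK vt.
by apply: complexS tD vct _ => //; apply/set0Pn; exists v; rewrite set21.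
Qed.
End InteriorStar.
End Star.

Theorem mainTheorem2 (T : finType) (K G D : {set {set T}}) (n : nat)
    (Ds : 'I_n -> {set {set T}}) :
  closed_surface K -> decomposition K G D Ds ->
  mv K <= nT D /\ (mv K).+1 <= nV D.
Proof.
move=> closedK [[_ [[sDK surfD] _]] _ [v [intv <-]] _ _].
have starD := star_sub_interior closedK sDK surfD intv.
split; first exact: subset_leq_card starD.
have [[[cxK _] _ _ _ _] degK] := closedK.
have [[cxD _] _ _ _ _] := surfD.
apply: (leq_ltn_trans (valence_le_nbrs v cxK _)) => [e /degK -> //|].
apply: (leq_ltn_trans (subset_leq_card (nbrs_sub_interior closedK sDK surfD intv))).
exact: card_nbrs_lt_nV cxD intv.1.
Qed.
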